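(* Let $I$ be an index set, and for each $i\in I$ let $x_i$ be an independent variable and $J_i$ a constant $N\times N$ matrix, with $[J_i,J_j]=0$ for all $i,j$. Let $G_{ij}$ ($i\neq j\in I$) be smooth $N\times N$ matrix functions of the variables $x_i$. For pairwise distinct $i,j,k$ define $$\mathcal L_{ijk}=\tfrac12\operatorname{tr}\Big\{G_{ij}J_i(\partial_kG_{ji})J_j-(\partial_kG_{ij})J_iG_{ji}J_j+G_{jk}J_j(\partial_iG_{kj})J_k-(\partial_iG_{jk})J_jG_{kj}J_k+G_{ki}J_k(\partial_jG_{ik})J_i-(\partial_jG_{ki})J_kG_{ik}J_i\Big\}-\operatorname{tr}\Big\{G_{ij}J_iG_{ki}J_kG_{jk}J_j-G_{ji}J_jG_{kj}J_kG_{ik}J_i\Big\},$$ and the 3-form $\mathsf L=\sum_{i<j<k}\mathcal L_{ijk}\,dx_i\wedge dx_j\wedge dx_k$ (for a fixed total order on $I$). Set $\Gamma_{i;j,k}=\partial_iG_{jk}-G_{ik}J_iG_{ji}$. Then $d\mathsf L$ has a double zero on solutions of the system $\partial_iG_{jk}=G_{ik}J_iG_{ji}$ ($i,j,k$ pairwise distinct): each coefficient of $d\mathsf L$ with respect to $dx_i\wedge dx_j\wedge dx_k\wedge dx_l$ is a linear combination, with constant coefficients, of traces of products containing exactly two factors of the form $\Gamma_{a;b,c}$ (with $a,b,c$ among $i,j,k,l$) and otherwise only constant matrices $J$. In particular $d\mathsf L=0$ on solutions of this system.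
   Context: $\partial_i=\partial/\partial x_i$; $\operatorname{tr}$ is the matrix trace. *)

From HB Require Import structures.
From mathcomp Require Import all_boot all_order all_algebra.
From mathcomp Require Import all_classical all_reals all_analysis.
Set Implicit Arguments. Unset Strict Implicit. Unset Printing Implicit Defensive.
Import Order.TTheory GRing.Theory Num.Theory.
Import numFieldNormedType.Exports.
Local Open Scope ring_scope.

Section Defs.
Variables (R : realType) (n N : nat).

(* Points of the space of independent variables (x_i)_{i in 'I_n}. *)
Notation pt := 'rV[R]_n.
Notation mx := 'M[R]_N.

Definition ev (i : 'I_n) : pt := delta_mx 0 i.

Definition pd {V : normedModType R} (i : 'I_n) (F : pt -> V) : pt -> V :=
  fun x => 'D_(ev i) F x.

Fixpoint pds {V : normedModType R} (s : seq 'I_n) (F : pt -> V) : pt -> V :=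
  match s with [::] => F | i :: s' => pd i (pds s' F) end.

Definition smooth {V : normedModType R} (F : pt -> V) : Prop :=
  forall s : seq 'I_n, continuous (pds s F) /\
    forall (i : 'I_n) (x : pt), derivable (pds s F) x (ev i).

Definition Lcoef (J : 'I_n -> mx) (G : 'I_n -> 'I_n -> pt -> mx)
    (i j k : 'I_n) (x : pt) : R :=
  2^-1 * \tr (G i j x *m J i *m pd k (G j i) x *m J j
            - pd k (G i j) x *m J i *m G j i x *m J j
            + G j k x *m J j *m pd i (G k j) x *m J k
            - pd i (G j k) x *m J j *m G k j x *m J k
            + G k i x *m J k *m pd j (G i k) x *m J i
            - pd j (G k i) x *m J k *m G i k x *m J i)
  - \tr (G i j x *m J i *m G k i x *m J k *m G j k x *m J j
       - G j i x *m J j *m G k j x *m J k *m G i k x *m J i).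

Definition Gam (J : 'I_n -> mx) (G : 'I_n -> 'I_n -> pt -> mx)
    (i j k : 'I_n) (x : pt) : mx :=
  pd i (G j k) x - G i k x *m J i *m G j i x.

(* Coefficient of dx_i/\dx_j/\dx_k/\dx_l (i<j<k<l) in dw, where w is the
   3-form sum_{a<b<c} w a b c dx_a/\dx_b/\dx_c. *)
Definition d3coef (w : 'I_n -> 'I_n -> 'I_n -> pt -> R) (i j k l : 'I_n)
    (x : pt) : R :=
  pd i (w j k l) x - pd j (w i k l) x + pd k (w i j l) x - pd l (w i j k) x.

End Defs.

Inductive trfactor (n : nat) :=
  | FGam of 'I_n & 'I_n & 'I_n
  | FJ of 'I_n.

Definition eval_factor (R : realType) (n N : nat) (J : 'I_n -> 'M[R]_N)
    (G : 'I_n -> 'I_n -> 'rV[R]_n -> 'M[R]_N) (x : 'rV[R]_n)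
    (f : trfactor n) : 'M[R]_N :=
  match f with
  | FGam a b c => Gam J G a b c x
  | FJ a => J a
  end.

Definition eval_word (R : realType) (n N : nat) (J : 'I_n -> 'M[R]_N)
    (G : 'I_n -> 'I_n -> 'rV[R]_n -> 'M[R]_N) (x : 'rV[R]_n)
    (w : seq (trfactor n)) : 'M[R]_N :=
  foldr (fun f M => eval_factor J G x f *m M) 1%:M w.

Definition is_gam (n : nat) (f : trfactor n) : bool :=
  if f is FGam _ _ _ then true else false.

Definition admissible (n : nat) (i j k l : 'I_n) (w : seq (trfactor n)) : bool :=
  let S := [:: i; j; k; l] in
  (count (@is_gam n) w == 2)%N &&
  all (fun f => match f with
                | FGam a b c => [&& a \in S, b \in S, c \in S,
                                    a != b, b != c & a != c]
                | FJ a => a \in S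
                end) w.

(* Every coefficient of dL is a trace polynomial in G, its partial derivatives
   and the J's, and so is the proposed combination of traces tr (Γ J Γ J) once
   Γ = ∂G - G J G is expanded.  A trace monomial depends only on its cyclic class
   (cyclicity of the trace) and on the multiset of its derivative indices
   (Schwarz's theorem, from smoothness); normalising both sides accordingly, the
   identity reduces to an equality of finite multisets of signed monomials,
   which is decided by computation. *)

From HB Require Import structures.
From mathcomp Require Import all_boot all_order all_algebra.
From mathcomp Require Import all_classical all_reals all_analysis.
From mathcomp Require Import ring lra.
Set Implicit Arguments. Unset Strict Implicit. Unset Printing Implicit Defensive.
Import Order.TTheory GRing.Theory Num.Theory.
Import numFieldNormedType.Exports.
Local Open Scope ring_scope.

(** * Schwarz's theorem *)

Section Schwarz.
Variables (R : realType) (V : normedModType R).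
Local Open Scope classical_set_scope.

Lemma is_derive_line (W : normedModType R) (f : V -> W) u y (s : R) :
  derivable f (s *: u + y) u ->
  is_derive s (1 : R) (fun t : R => f (t *: u + y)) ('D_u f (s *: u + y)).
Proof.
have quotE : (fun h : R => h^-1 *: (((fun t : R => f (t *: u + y)) \o shift s) (h *: 1)
      - f (s *: u + y)))
    = fun h : R => h^-1 *: ((f \o shift (s *: u + y)) (h *: u) - f (s *: u + y)).
  by apply/funext => h /=; rewrite [_%:A]mulr1 scalerDl addrA.
by move=> df; apply: DeriveDef; rewrite /derivable /derive quotE.
Qed.

Lemma mvt_open_interval (g dg : R -> R) (h : R) : 0 < h ->
  (forall t : R, is_derive t (1 : R) g (dg t)) ->
  exists2 s, 0 < s < h & g h - g 0 = h * dg s.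
Proof.
move=> h0 dg_g.
have gc : {within `[0, h], continuous g}.
  by apply: derivable_within_continuous => t _; exact: ex_derive.
have [s] := MVT h0 (fun t _ => dg_g t) gc.
by rewrite in_itv /= subr0 mulrC => ? ?; exists s.
Qed.

Definition second_difference (f : V -> R) u v x (h k : R) :=
  f (x + h *: u + k *: v) - f (x + h *: u) - f (x + k *: v) + f x.

Lemma second_differenceC f u v x h k :
  second_difference f u v x h k = second_difference f v u x k h.
Proof. by rewrite /second_difference (addrAC x (h *: u)) [_ - f (x + h *: u) - _]addrAC. Qed.

Lemma second_difference_mvt (f : V -> R) u v x (h k : R) :
  (forall z, derivable f z u) -> (forall z, derivable ('D_u f) z v) ->
  0 < h -> 0 < k ->
  exists s, exists2 t, 0 < s < h /\ 0 < t < k &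
    second_difference f u v x h k = h * k * 'D_v ('D_u f) (x + s *: u + t *: v).
Proof.
move=> fu fuv h0 k0.
have [s s_in] := @mvt_open_interval
  (fun t => f (t *: u + (x + k *: v)) - f (t *: u + x))
  (fun t => 'D_u f (t *: u + (x + k *: v)) - 'D_u f (t *: u + x)) h h0
  (fun t => is_deriveB (is_derive_line (fu _)) (is_derive_line (fu _))).
have [t t_in] := @mvt_open_interval
  (fun t => 'D_u f (t *: v + (x + s *: u)))
  (fun t => 'D_v ('D_u f) (t *: v + (x + s *: u))) k k0
  (fun t => is_derive_line (fuv _)).
rewrite /= !scale0r !add0r !(addrC _ (x + _)) !(addrC _ x) => Du_diff.
rewrite !(addrAC x (k *: v)) => f_diff.
by exists s, t => //; rewrite /second_difference -mulrA -Du_diff -f_diff; ring.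
Qed.

Lemma second_difference_cvg (f : V -> R) u v x e :
  (forall z, derivable f z u) -> (forall z, derivable ('D_u f) z v) ->
  {for x, continuous ('D_v ('D_u f))} -> 0 < e ->
  exists2 d, 0 < d & forall h, 0 < h < d ->
    `|second_difference f u v x h h / (h * h) - 'D_v ('D_u f) x| < e.
Proof.
move=> fu fuv cont e0.
have [r r0 near_x] := (nbhs_normP _ _).1 ((cvgrPdist_lt _ _).1 cont _ e0).
have uv0 : 0 < `|u| + `|v| + 1 by rewrite ltr_wpDl // addr_ge0.
exists (r / (`|u| + `|v| + 1)) => [|h /andP[h0 hr]]; first by rewrite divr_gt0.
have [s [t [/andP[s0 sh] /andP[t0 th]] ->]] := second_difference_mvt x fu fuv h0 h0.
rewrite mulrAC divff ?mul1r ?mulf_neq0 ?gt_eqF // distrC; apply: near_x => /=.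
rewrite opprD addrA opprD addrA subrr add0r -opprD normrN.
rewrite (le_lt_trans (ler_normD _ _)) // !normrZ !gtr0_norm //.
apply: (@le_lt_trans _ _ (h * (`|u| + `|v| + 1))); last by rewrite -ltr_pdivlMr.
by have := normr_ge0 u; have := normr_ge0 v; nra.
Qed.

Lemma schwarz (f : V -> R) u v x :
  (forall z, derivable f z u) -> (forall z, derivable f z v) ->
  (forall z, derivable ('D_u f) z v) -> (forall z, derivable ('D_v f) z u) ->
  {for x, continuous ('D_v ('D_u f))} -> {for x, continuous ('D_u ('D_v f))} ->
  'D_v ('D_u f) x = 'D_u ('D_v f) x.
Proof.
move=> fu fv fuv fvu cuv cvu; apply/eqP; rewrite -subr_eq0 -normr_le0.
apply/ler_addgt0Pr => e e0; rewrite add0r.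
have e20 : 0 < e / 2 by rewrite divr_gt0.
have [d1 d10 approx_uv] := second_difference_cvg fu fuv cuv e20.
have [d2 d20 approx_vu] := second_difference_cvg fv fvu cvu e20.
have [h /approx_uv/ltW close_uv /approx_vu/ltW close_vu] :
    exists2 h, 0 < h < d1 & 0 < h < d2.
  have m0 : 0 < Num.min d1 d2 by rewrite lt_min d10 d20.
  have m2 : Num.min d1 d2 / 2 < Num.min d1 d2.
    by rewrite ltr_pdivrMr // ltr_pMr // ltr1n.
  by exists (Num.min d1 d2 / 2); rewrite divr_gt0 //= (lt_le_trans m2) // ge_min lexx ?orbT.
rewrite -second_differenceC in close_vu.
rewrite distrC in close_uv.
by rewrite (splitr e); exact: le_trans (ler_distD _ _ _) (lerD close_uv close_vu).
Qed.
End Schwarz.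

(** * Derivatives of matrix-valued maps *)

Lemma mxtraceN (R : pzRingType) m (A : 'M[R]_m) : \tr (- A) = - \tr A.
Proof. exact: raddfN. Qed.

Section MatrixDerive.
Variables (R : realFieldType) (V : normedModType R).

Lemma is_derive_entry m p (F : V -> 'M[R]_(m, p)) x v (dF : 'M[R]_(m, p)) a b :
  is_derive x v F dF -> is_derive x v (fun y => F y a b) (dF a b).
Proof.
case=> Fd DF; apply: DeriveDef; first exact: (derivable_mxP F x v).1 Fd a b.
by have /matrixP/(_ a b) := derive_mx Fd; rewrite DF mxE.
Qed.

Lemma is_derive_mx m p (F : V -> 'M[R]_(m, p)) x v (dF : 'M[R]_(m, p)) :
  (forall a b, is_derive x v (fun y => F y a b) (dF a b)) -> is_derive x v F dF.
Proof.
move=> dF_F; have Fd : derivable F x v by apply/derivable_mxP => a b; exact: ex_derive.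
by apply: DeriveDef => //; apply/matrixP => a b; rewrite derive_mx // mxE derive_val.
Qed.

Lemma is_derive_mulmx m p q (F : V -> 'M[R]_(m, p)) (H : V -> 'M[R]_(p, q)) x v
    (dF : 'M[R]_(m, p)) (dH : 'M[R]_(p, q)) :
  is_derive x v F dF -> is_derive x v H dH ->
  is_derive x v (fun y => F y *m H y) (dF *m H x + F x *m dH).
Proof.
move=> dF_F dH_H; apply: is_derive_mx => a b.
have -> : (fun y => (F y *m H y) a b) = \sum_(c < p) (fun y => F y a c * H y c b).
  by apply/funext => y; rewrite mxE fct_sumE.
apply: is_derive_eq; first by apply: is_derive_sum => c;
  apply: is_deriveM; exact: is_derive_entry.
rewrite !mxE -big_split /=; apply: eq_bigr => c _.
by rewrite /GRing.scale /= addrC mulrC [H x c b * _]mulrC.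
Qed.

Lemma is_derive_mxtrace m (F : V -> 'M[R]_m) x v (dF : 'M[R]_m) :
  is_derive x v F dF -> is_derive x v (fun y => \tr (F y)) (\tr dF).
Proof.
move=> dF_F; have -> : (fun y => \tr (F y)) = \sum_(c < m) (fun y => F y c c).
  by apply/funext => y; rewrite fct_sumE.
by apply: is_derive_sum => c; exact: is_derive_entry.
Qed.
End MatrixDerive.

Section PartialDerivatives.
Variables (R : realType) (n : nat).
Local Notation pt := 'rV[R]_n.

Lemma pds_cat (W : normedModType R) s t (F : pt -> W) : pds (s ++ t) F = pds s (pds t F).
Proof. by elim: s => //= a s ->. Qed.

Lemma smooth_pds (W : normedModType R) s (F : pt -> W) : smooth F -> smooth (pds s F).
Proof. by move=> sm t; rewrite -pds_cat; exact: sm. Qed.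

Lemma pds_entry m p s (F : pt -> 'M[R]_(m, p)) a b :
  smooth F -> pds s (fun x => F x a b) = fun x => pds s F x a b.
Proof.
move=> sm; elim: s => //= c s ->; apply/funext => x.
by rewrite /pd derive_mx ?mxE //; exact: (sm s).2.
Qed.

Lemma smooth_entry m p (F : pt -> 'M[R]_(m, p)) a b :
  smooth F -> smooth (fun x => F x a b).
Proof.
move=> sm s; rewrite pds_entry //; split=> [x|c x].
  apply: (@continuous_comp _ _ _ (pds s F) (fun M : 'M[R]_(m, p) => M a b)).
    exact: (sm s).1.
  exact: coord_continuous.
exact: (derivable_mxP _ _ _).1 ((sm s).2 c x) a b.
Qed.

Lemma pd_comm_real (f : pt -> R) a b : smooth f -> pd a (pd b f) = pd b (pd a f).
Proof.
move=> sm; apply/funext => x; apply: schwarz.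
- exact: (sm [::]).2.
- exact: (sm [::]).2.
- exact: (sm [:: b]).2.
- exact: (sm [:: a]).2.
- exact: (sm [:: a; b]).1.
- exact: (sm [:: b; a]).1.
Qed.

Lemma pd_comm m p (F : pt -> 'M[R]_(m, p)) a b :
  smooth F -> pd a (pd b F) = pd b (pd a F).
Proof.
move=> sm; apply/funext => x; apply/matrixP => r c.
have E s : pds s F x r c = pds s (fun y => F y r c) x by rewrite pds_entry.
change (pds [:: a; b] F x r c = pds [:: b; a] F x r c).
rewrite [LHS]E [RHS]E.
exact: (congr1 (@^~ x) (pd_comm_real a b (smooth_entry r c sm))).
Qed.

Lemma pds_cat_cons m p (F : pt -> 'M[R]_(m, p)) s a t :
  smooth F -> pds (s ++ a :: t) F = pd a (pds (s ++ t) F).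
Proof.
move=> sm; elim: s => [//|b s IH].
change (pd b (pds (s ++ a :: t) F) = pd a (pd b (pds (s ++ t) F))).
by rewrite IH; apply: pd_comm; exact: smooth_pds.
Qed.

Lemma pds_perm m p (F : pt -> 'M[R]_(m, p)) s t :
  smooth F -> perm_eq s t -> pds s F = pds t F.
Proof.
move=> sm; elim: s t => [|a s IH] t.
  by move=> /perm_size/esym/size0nil ->.
move=> eq_st; have a_t : a \in t by rewrite -(perm_mem eq_st) mem_head.
move: eq_st; case/splitPr: a_t => t1 t2 eq_st.
have /IH eq_s : perm_eq s (t1 ++ t2).
  by rewrite -(perm_cons a) (permPl eq_st) -cat1s perm_catCA.
by rewrite pds_cat_cons // -eq_s.
Qed.
End PartialDerivatives.

(** * Trace polynomials *)

(* [AG ds b c] stands for the partial derivative ∂_ds G_bc and [AJ a] for J_a;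
   the indices are four slots, instantiated by [sigma] when evaluating. *)
Inductive atom :=
  | AG of seq 'I_4 & 'I_4 & 'I_4
  | AJ of 'I_4.

Definition atom_code (a : atom) : seq 'I_4 * 'I_4 * 'I_4 + 'I_4 :=
  match a with AG ds b c => inl (ds, b, c) | AJ a => inr a end.
Definition atom_decode (e : seq 'I_4 * 'I_4 * 'I_4 + 'I_4) : atom :=
  match e with inl (ds, b, c) => AG ds b c | inr a => AJ a end.
Lemma atom_codeK : cancel atom_code atom_decode. Proof. by case. Qed.
HB.instance Definition _ := Equality.copy atom (can_type atom_codeK).

(* Signed monomials, read under the trace; [true] marks a minus sign. *)
Definition sympoly := seq (bool * seq atom).

Definition opp_sympoly (p : sympoly) : sympoly := [seq (~~ t.1, t.2) | t <- p].

Definition mul_sympoly (p q : sympoly) : sympoly :=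
  [seq (t.1 (+) u.1, t.2 ++ u.2) | t <- p, u <- q].

Definition deriv_atom (s : 'I_4) (a : atom) : seq atom :=
  if a is AG ds b c then [:: AG (s :: ds) b c] else [::].

Fixpoint deriv_mono (s : 'I_4) (m : seq atom) : seq (seq atom) :=
  if m is a :: m' then [seq d :: m' | d <- deriv_atom s a] ++ map (cons a) (deriv_mono s m')
  else [::].

Definition deriv_sympoly (s : 'I_4) (p : sympoly) : sympoly :=
  [seq (t.1, m) | t <- p, m <- deriv_mono s t.2].

Definition atom_wf (a : atom) : bool := if a is AG _ b c then b != c else true.
Definition sympoly_wf (p : sympoly) : bool := all (fun t => all atom_wf t.2) p.

Definition sort_atom (a : atom) : atom :=
  if a is AG ds b c then AG (sort (fun d d' : 'I_4 => (d <= d')%N) ds) b c else a.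

Definition atom_key (a : atom) : seq nat :=
  match a with
  | AG ds b c => [:: 0, val b, val c, size ds & map val ds]%N
  | AJ a => [:: 1; val a]%N
  end.

Definition canon_rot (m : seq atom) : seq atom :=
  let key r := flatten (map atom_key r) : seqlexi nat in
  foldr (fun r best => if (key r <= key best)%O then r else best) m
    [seq rot r m | r <- iota 0 (size m)].

(* By cyclicity of the trace and Schwarz's theorem, the trace of a monomial only
   depends on its least rotation once the derivative indices are sorted. *)
Definition canon_mono (m : seq atom) : seq atom := canon_rot (map sort_atom m).

Definition sympoly_eq0 (p : sympoly) : bool :=
  perm_eq [seq canon_mono t.2 | t <- p & ~~ t.1] [seq canon_mono t.2 | t <- p & t.1].

Section Evaluation.
Variables (R : realType) (n N : nat) (sigma : 'I_4 -> 'I_n).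
Variables (J : 'I_n -> 'M[R]_N) (G : 'I_n -> 'I_n -> 'rV[R]_n -> 'M[R]_N).

Definition eval_atom x (a : atom) : 'M[R]_N :=
  match a with
  | AG ds b c => pds (map sigma ds) (G (sigma b) (sigma c)) x
  | AJ a => J (sigma a)
  end.

Definition eval_mono x (m : seq atom) : 'M[R]_N :=
  foldr (fun a M => eval_atom x a *m M) 1%:M m.

Definition eval_mxpoly x (p : sympoly) : 'M[R]_N :=
  \sum_(t <- p) (-1) ^+ t.1 *: eval_mono x t.2.

Definition eval_sympoly x (p : sympoly) : R := \tr (eval_mxpoly x p).

Lemma eval_mono_cat x m1 m2 : eval_mono x (m1 ++ m2) = eval_mono x m1 *m eval_mono x m2.
Proof. by elim: m1 => [|a m1 IH] /=; rewrite ?mul1mx // IH mulmxA. Qed.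

Lemma eval_mono_foldl x m :
  eval_mono x m = foldl (fun M a => M *m eval_atom x a) 1%:M m.
Proof.
rewrite -[eval_mono x m]mul1mx; elim: m 1%:M => [|a m IH] M /=; first by rewrite mulmx1.
by rewrite mulmxA IH.
Qed.

Lemma eval_mxpoly_cat x p q : eval_mxpoly x (p ++ q) = eval_mxpoly x p + eval_mxpoly x q.
Proof. exact: big_cat. Qed.

Lemma eval_mxpoly_opp x p : eval_mxpoly x (opp_sympoly p) = - eval_mxpoly x p.
Proof.
rewrite /eval_mxpoly big_map -sumrN; apply: eq_bigr => -[b m] _ /=.
by rewrite -scaleNr signrN.
Qed.

Lemma eval_mxpoly_mul x p q :
  eval_mxpoly x (mul_sympoly p q) = eval_mxpoly x p *m eval_mxpoly x q.
Proof.
rewrite /eval_mxpoly big_allpairs_dep mulmx_suml; apply: eq_bigr => t _.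
rewrite mulmx_sumr; apply: eq_bigr => u _.
by rewrite eval_mono_cat signr_addb -scalerA scalemxAr scalemxAl.
Qed.

Lemma eval_sympoly_cat x p q : eval_sympoly x (p ++ q) = eval_sympoly x p + eval_sympoly x q.
Proof. by rewrite /eval_sympoly eval_mxpoly_cat mxtraceD. Qed.

Lemma eval_sympoly_opp x p : eval_sympoly x (opp_sympoly p) = - eval_sympoly x p.
Proof. by rewrite /eval_sympoly eval_mxpoly_opp mxtraceN. Qed.

Lemma eval_sympoly_split x p : eval_sympoly x p =
  \sum_(m <- [seq t.2 | t <- p & ~~ t.1]) \tr (eval_mono x m)
  - \sum_(m <- [seq t.2 | t <- p & t.1]) \tr (eval_mono x m).
Proof.
elim: p => [|[b m] p IH]; first by rewrite /eval_sympoly /eval_mxpoly !big_nil raddf0 subr0.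
have -> : eval_sympoly x ((b, m) :: p) = (-1) ^+ b * \tr (eval_mono x m) + eval_sympoly x p.
  by rewrite /eval_sympoly /eval_mxpoly big_cons mxtraceD mxtraceZ.
by rewrite IH; case: b; rewrite /= !big_cons /=; ring.
Qed.

Hypothesis sigma_inj : injective sigma.
Hypothesis G_smooth : forall a b, a != b -> smooth (G a b).

Lemma eval_sort_atom x a : atom_wf a -> eval_atom x (sort_atom a) = eval_atom x a.
Proof.
case: a => [ds b c bc|//] /=; congr (_ x); apply: pds_perm.
  by apply: G_smooth; rewrite (inj_eq sigma_inj).
by apply: perm_map; rewrite perm_sort.
Qed.

Lemma mxtrace_eval_mono_rot x r m : \tr (eval_mono x (rot r m)) = \tr (eval_mono x m).
Proof. by rewrite eval_mono_cat mxtrace_mulC -eval_mono_cat cat_take_drop. Qed.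

Lemma canon_rotP m : exists r, canon_rot m = rot r m.
Proof.
rewrite /canon_rot foldr_map; elim: (iota _ _) => [|r rs [r' IH]] /=.
  by exists 0; rewrite rot0.
by rewrite IH; case: ifP; eexists.
Qed.

Lemma mxtrace_canon_mono x m :
  all atom_wf m -> \tr (eval_mono x (canon_mono m)) = \tr (eval_mono x m).
Proof.
move=> wf; have [r ->] := canon_rotP (map sort_atom m) : exists r, canon_mono m = _.
rewrite mxtrace_eval_mono_rot; congr (\tr _).
by elim: m wf => //= a m IH /andP[wa wm]; rewrite eval_sort_atom // IH.
Qed.

Lemma eval_sympoly_eq0 x p : sympoly_wf p -> sympoly_eq0 p -> eval_sympoly x p = 0.
Proof.
move=> wf eq0; rewrite eval_sympoly_split; apply/eqP; rewrite subr_eq0; apply/eqP.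
have canonE (P : pred (bool * seq atom)) :
    \sum_(m <- [seq t.2 | t <- p & P t]) \tr (eval_mono x m)
    = \sum_(m <- [seq canon_mono t.2 | t <- p & P t]) \tr (eval_mono x m).
  rewrite !big_map; apply: eq_big_seq => t; rewrite mem_filter => /andP[_ tp].
  by rewrite mxtrace_canon_mono //; exact: (allP wf).
by rewrite !canonE (perm_big _ eq0).
Qed.

Lemma is_derive_eval_atom x s a : atom_wf a ->
  is_derive x (ev R (sigma s)) (eval_atom^~ a) (\sum_(d <- deriv_atom s a) eval_atom x d).
Proof.
case: a => [ds b c bc|a _] /=; last by rewrite big_nil; exact: is_derive_cst.
have sm : smooth (G (sigma b) (sigma c)) by apply: G_smooth; rewrite (inj_eq sigma_inj).
by rewrite big_seq1; apply: DeriveDef; first exact: (sm _).2.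
Qed.

Lemma is_derive_eval_mono x s m : all atom_wf m ->
  is_derive x (ev R (sigma s)) (eval_mono^~ m) (\sum_(d <- deriv_mono s m) eval_mono x d).
Proof.
elim: m => [_|a m IH /andP[wa wm]] /=; first by rewrite big_nil; exact: is_derive_cst.
apply: is_derive_eq.
  exact: (is_derive_mulmx (F := eval_atom^~ a) (H := eval_mono^~ m)
            (is_derive_eval_atom x s wa) (IH wm)).
by rewrite big_cat !big_map mulmx_suml mulmx_sumr.
Qed.

Lemma is_derive_eval_mxpoly x s p : sympoly_wf p ->
  is_derive x (ev R (sigma s)) (eval_mxpoly^~ p) (eval_mxpoly x (deriv_sympoly s p)).
Proof.
elim: p => [_|[b m] p IH /andP[/= wm wp]].
  have -> : eval_mxpoly^~ [::] = cst 0 by apply/funext => y; rewrite /eval_mxpoly big_nil.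
  by rewrite /eval_mxpoly big_nil; exact: is_derive_cst.
have := is_deriveD (is_deriveZ ((-1) ^+ b) (is_derive_eval_mono x s wm)) (IH wp).
rewrite [X in is_derive _ _ X](_ : _ = eval_mxpoly^~ ((b, m) :: p)); last first.
  by apply/funext => y; rewrite /eval_mxpoly big_cons.
move/is_derive_eq; apply.
rewrite [deriv_sympoly _ _]/= eval_mxpoly_cat scaler_sumr /eval_mxpoly big_map.
by congr (_ + _); apply: eq_bigr.
Qed.

Lemma is_derive_eval_sympoly x s p : sympoly_wf p ->
  is_derive x (ev R (sigma s)) (eval_sympoly^~ p) (eval_sympoly x (deriv_sympoly s p)).
Proof. by move=> wf; apply: is_derive_mxtrace; exact: is_derive_eval_mxpoly. Qed.

Lemma eval_sympoly_double_eq0 x p q :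
  sympoly_wf (p ++ opp_sympoly (q ++ q)) -> sympoly_eq0 (p ++ opp_sympoly (q ++ q)) ->
  2^-1 * eval_sympoly x p = eval_sympoly x q.
Proof.
move=> wf /(eval_sympoly_eq0 x wf) /eqP.
rewrite !eval_sympoly_cat eval_sympoly_opp eval_sympoly_cat addr_eq0 opprK => /eqP ->.
lra.
Qed.
End Evaluation.

(* Used through unification: [ring] does not identify the traces produced by
   [Lcoef] with those produced by [eval_sympoly]. *)
Lemma lagrangian_rearrange (F : realFieldType) (t1 t2 t3 t4 t5 t6 c1 c2 : F) :
  2^-1 * (t1 - t2 + t3 - t4 + t5 - t6) - (c1 - c2)
  = 2^-1 * (t1 + (- t2 + (t3 + (- t4 + (t5 + (- t6 + (- c1 + (- c1 + (c2 + c2))))))))).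
Proof. lra. Qed.

(* 2 L_abc: the cubic terms are listed twice so that all coefficients are ±1. *)
Definition twice_lagrangian (a b c : 'I_4) : sympoly :=
  let g := AG [::] in let dg d := AG [:: d] in
  [:: (false, [:: g a b; AJ a; dg c b a; AJ b]);
      (true,  [:: dg c a b; AJ a; g b a; AJ b]);
      (false, [:: g b c; AJ b; dg a c b; AJ c]);
      (true,  [:: dg a b c; AJ b; g c b; AJ c]);
      (false, [:: g c a; AJ c; dg b a c; AJ a]);
      (true,  [:: dg b c a; AJ c; g a c; AJ a]);
      (true,  [:: g a b; AJ a; g c a; AJ c; g b c; AJ b]);
      (true,  [:: g a b; AJ a; g c a; AJ c; g b c; AJ b]);
      (false, [:: g b a; AJ b; g c b; AJ c; g a c; AJ a]);
      (false, [:: g b a; AJ b; g c b; AJ c; g a c; AJ a])].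

Definition twice_d3lagrangian : sympoly :=
  deriv_sympoly (inZp 0) (twice_lagrangian (inZp 1) (inZp 2) (inZp 3))
  ++ opp_sympoly (deriv_sympoly (inZp 1) (twice_lagrangian (inZp 0) (inZp 2) (inZp 3)))
  ++ deriv_sympoly (inZp 2) (twice_lagrangian (inZp 0) (inZp 1) (inZp 3))
  ++ opp_sympoly (deriv_sympoly (inZp 3) (twice_lagrangian (inZp 0) (inZp 1) (inZp 2))).

Section Lagrangian.
Variables (R : realType) (n N : nat) (sigma : 'I_4 -> 'I_n).
Variables (J : 'I_n -> 'M[R]_N) (G : 'I_n -> 'I_n -> 'rV[R]_n -> 'M[R]_N).
Hypothesis sigma_inj : injective sigma.
Hypothesis G_smooth : forall a b, a != b -> smooth (G a b).

Local Notation eval_sympoly := (eval_sympoly sigma J G).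

Lemma Lcoef_twice_lagrangian a b c x :
  Lcoef J G (sigma a) (sigma b) (sigma c) x = 2^-1 * eval_sympoly x (twice_lagrangian a b c).
Proof.
rewrite /Lcoef /eval_sympoly /eval_mxpoly !big_cons big_nil !eval_mono_foldl /= !expr0 !expr1.
rewrite !scale1r !scaleN1r !mul1mx !mxtraceD !mxtraceN mxtrace0 addr0.
exact: lagrangian_rearrange.
Qed.

Lemma d3coef_twice_d3lagrangian x :
  d3coef (Lcoef J G) (sigma (inZp 0)) (sigma (inZp 1)) (sigma (inZp 2)) (sigma (inZp 3)) x
  = 2^-1 * eval_sympoly x twice_d3lagrangian.
Proof.
have pdE s a b c : sympoly_wf (twice_lagrangian a b c) ->
    pd (sigma s) (Lcoef J G (sigma a) (sigma b) (sigma c)) x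
    = 2^-1 * eval_sympoly x (deriv_sympoly s (twice_lagrangian a b c)).
  move=> wf; have -> : Lcoef J G (sigma a) (sigma b) (sigma c)
      = 2^-1 \*o (eval_sympoly^~ (twice_lagrangian a b c)).
    by apply/funext => y; rewrite Lcoef_twice_lagrangian.
  by case: (is_derive_eval_sympoly J sigma_inj G_smooth x s wf) => Pd PD; rewrite /pd deriveMl // PD.
rewrite /d3coef !pdE //.
rewrite /twice_d3lagrangian 3!eval_sympoly_cat 2!eval_sympoly_opp.
by rewrite -mulrBr -mulrDr -mulrBr !addrA.
Qed.
End Lagrangian.

Definition relabel_factor m n (f : 'I_m -> 'I_n) (t : trfactor m) : trfactor n :=
  match t with FGam a b c => FGam (f a) (f b) (f c) | FJ a => FJ (f a) end.

Definition expand_factor (t : trfactor 4) : sympoly :=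
  match t with
  | FGam a b c => [:: (false, [:: AG [:: a] b c]); (true, [:: AG [::] a c; AJ a; AG [::] b a])]
  | FJ a => [:: (false, [:: AJ a])]
  end.

Definition expand_word (w : seq (trfactor 4)) : sympoly :=
  foldr (fun t p => mul_sympoly (expand_factor t) p) [:: (false, [::])] w.

Definition expand_words (ws : seq (bool * seq (trfactor 4))) : sympoly :=
  [seq (w.1 (+) t.1, t.2) | w <- ws, t <- expand_word w.2].

Definition gamma_word (a b c d : nat) : seq (trfactor 4) :=
  [:: FGam (inZp a) (inZp b) (inZp c); FJ (inZp b); FGam (inZp d) (inZp c) (inZp b); FJ (inZp c)].

(* For each pair {b, c} of the four slots, with complementary pair {a, d}, the
   terms ± tr (Γ_a;b,c J_b Γ_d;c,b J_c) and ∓ tr (Γ_d;b,c J_b Γ_a;c,b J_c). *)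
Definition gamma_words : seq (bool * seq (trfactor 4)) :=
  [:: (false, gamma_word 2 0 1 3); (true, gamma_word 3 0 1 2);
      (true, gamma_word 1 0 2 3); (false, gamma_word 3 0 2 1);
      (false, gamma_word 1 0 3 2); (true, gamma_word 2 0 3 1);
      (false, gamma_word 0 1 2 3); (true, gamma_word 3 1 2 0);
      (true, gamma_word 0 1 3 2); (false, gamma_word 2 1 3 0);
      (false, gamma_word 0 2 3 1); (true, gamma_word 1 2 3 0)].

Lemma twice_d3lagrangian_gamma_words :
  sympoly_wf (twice_d3lagrangian ++ opp_sympoly (expand_words gamma_words ++ expand_words gamma_words))
  && sympoly_eq0 (twice_d3lagrangian ++ opp_sympoly (expand_words gamma_words ++ expand_words gamma_words)).
Proof. by vm_compute. Qed.

Lemma gamma_words_admissible :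
  all (fun w => admissible (inZp 0) (inZp 1) (inZp 2) (inZp 3) w.2) gamma_words.
Proof. by vm_compute. Qed.

Lemma admissible_relabel m n (f : 'I_m -> 'I_n) (i j k l : 'I_m) w : injective f ->
  admissible i j k l w -> admissible (f i) (f j) (f k) (f l) (map (relabel_factor f) w).
Proof.
move=> f_inj /andP[count2 adm]; apply/andP; split.
  by rewrite count_map (@eq_count _ _ (@is_gam m)) // => -[].
rewrite all_map; apply: sub_all adm => -[a b c|a] /=;
  rewrite -[[:: f i; f j; f k; f l]]/(map f [:: i; j; k; l]) !(mem_map f_inj) //.
by rewrite !(inj_eq f_inj).
Qed.

Lemma eval_word_eq0 (R : realType) (n N : nat) (J : 'I_n -> 'M[R]_N) G x (i j k l : 'I_n) w :
  (forall a b c, a != b -> b != c -> a != c -> forall x, Gam J G a b c x = 0) ->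
  admissible i j k l w -> eval_word J G x w = 0.
Proof.
move=> Gam0 /andP[/eqP count2 adm]; have : has (@is_gam n) w by rewrite has_count count2.
elim: w adm {count2} => [//|[a b c|a] w IH] /= /andP[t_adm w_adm] has_gam.
  by case/and5P: t_adm => _ _ _ ab /andP[bc ac]; rewrite Gam0 // mul0mx.
by rewrite IH // mulmx0.
Qed.

Lemma sum_admissible_words_eq0 (R : realType) (n N : nat) (J : 'I_n -> 'M[R]_N) G x
    (i j k l : 'I_n) (ts : seq (R * seq (trfactor n))) :
  (forall a b c, a != b -> b != c -> a != c -> forall x, Gam J G a b c x = 0) ->
  all (fun t => admissible i j k l t.2) ts ->
  \sum_(t <- ts) t.1 * \tr (eval_word J G x t.2) = 0.
Proof.
move=> Gam0; elim: ts => [_|t ts IH /andP[t_adm ts_adm]]; first by rewrite big_nil.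
by rewrite big_cons (eval_word_eq0 _ Gam0 t_adm) mxtrace0 mulr0 add0r IH.
Qed.

Section Words.
Variables (R : realType) (n N : nat) (sigma : 'I_4 -> 'I_n).
Variables (J : 'I_n -> 'M[R]_N) (G : 'I_n -> 'I_n -> 'rV[R]_n -> 'M[R]_N).

Lemma eval_word_relabel x w :
  eval_word J G x (map (relabel_factor sigma) w) = eval_mxpoly sigma J G x (expand_word w).
Proof.
elim: w => [|[a b c|a] w IH] /=.
- by rewrite /eval_mxpoly big_seq1 scale1r.
- rewrite eval_mxpoly_mul IH; congr (_ *m _).
  by rewrite /eval_mxpoly !big_cons big_nil /= scale1r scaleN1r addr0 !mulmx1 mulmxA.
- rewrite eval_mxpoly_mul IH; congr (_ *m _).
  by rewrite /eval_mxpoly big_seq1 scale1r /= mulmx1.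
Qed.

Lemma sum_relabelled_words x (ws : seq (bool * seq (trfactor 4))) :
  \sum_(t <- [seq ((-1) ^+ w.1, map (relabel_factor sigma) w.2) | w : bool * _ <- ws])
     t.1 * \tr (eval_word J G x t.2)
  = eval_sympoly sigma J G x (expand_words ws).
Proof.
rewrite big_map /eval_sympoly /eval_mxpoly big_allpairs_dep raddf_sum; apply: eq_bigr => w _.
rewrite eval_word_relabel /eval_mxpoly !raddf_sum mulr_sumr; apply: eq_bigr => t _ /=.
by rewrite !linearZ signr_addb mulrA.
Qed.

Lemma d3coef_gamma_words x :
  injective sigma -> (forall a b, a != b -> smooth (G a b)) ->
  d3coef (Lcoef J G) (sigma (inZp 0)) (sigma (inZp 1)) (sigma (inZp 2)) (sigma (inZp 3)) x
  = eval_sympoly sigma J G x (expand_words gamma_words).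
Proof.
move=> sigma_inj G_smooth; have /andP[wf eq0] := twice_d3lagrangian_gamma_words.
by rewrite (d3coef_twice_d3lagrangian J sigma_inj G_smooth)
  (eval_sympoly_double_eq0 J sigma_inj G_smooth x wf eq0).
Qed.
End Words.

Theorem theorem5p1 (R : realType) (n N : nat) (i j k l : 'I_n)
    (hij : (i < j)%N) (hjk : (j < k)%N) (hkl : (k < l)%N) :
  exists ts : seq (R * seq (trfactor n)),
    all (fun t => admissible i j k l t.2) ts /\
    forall (J : 'I_n -> 'M[R]_N) (G : 'I_n -> 'I_n -> 'rV[R]_n -> 'M[R]_N),
      (forall a b, J a *m J b = J b *m J a) ->
      (forall a b, a != b -> smooth (G a b)) ->
      (forall x, d3coef (Lcoef J G) i j k l x
                 = \sum_(t <- ts) t.1 * \tr (eval_word J G x t.2)) /\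
      ((forall a b c, a != b -> b != c -> a != c ->
          forall x, Gam J G a b c x = 0) ->
       forall x, d3coef (Lcoef J G) i j k l x = 0).
Proof.
pose sigma (s : 'I_4) : 'I_n := nth i [:: i; j; k; l] s.
have sigma_inj : injective sigma.
  have : sorted ltn [seq val a | a <- [:: i; j; k; l]] by rewrite /= hij hjk hkl.
  move=> /(sorted_uniq ltn_trans ltnn); rewrite (map_inj_uniq val_inj) => uniq_ijkl.
  by move=> a b /eqP; rewrite nth_uniq ?ltn_ord // => /eqP/val_inj.
pose ts := [seq ((-1 : R) ^+ w.1, map (relabel_factor sigma) w.2) | w : bool * _ <- gamma_words].
have admissible_ts : all (fun t => admissible i j k l t.2) ts.
  rewrite /ts all_map; apply: sub_all gamma_words_admissible => w adm.
  exact: admissible_relabel sigma_inj adm.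
exists ts; split; first exact: admissible_ts.
move=> J G _ G_smooth.
have d3coefE x : d3coef (Lcoef J G) i j k l x = \sum_(t <- ts) t.1 * \tr (eval_word J G x t.2).
  by rewrite sum_relabelled_words -(d3coef_gamma_words J x sigma_inj G_smooth).
split; first exact: d3coefE.
by move=> Gam0 x; rewrite d3coefE; exact: sum_admissible_words_eq0 Gam0 admissible_ts.
Qed.
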